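(* In the setting below, if $\eta \geq \eta_0$ and an oscillation happens at iteration $t$, then $\hat{w}_t \leq \eta/\gamma$.
   Context: Dimension $d=2$. Data $x_1,\dots,x_n\in\mathbb{R}^2$ with $\|x_i\|\le 1$, linearly separable (some $w$ has $\langle w,x_i\rangle>0$ for all $i$). $F(w) = \frac{1}{n}\sum_{i=1}^n \log(1+\exp(-\langle w, x_i\rangle))$. Maximum margin $\gamma = \max_{\|w\|=1}\min_i \langle w, x_i\rangle$ with maximizer the unit vector $w_*$; $v_*$ is a fixed unit vector orthogonal to $w_*$. Gradient descent: $w_0=0$, $w_{t+1} = w_t - \eta\nabla F(w_t)$ with constant $\eta>0$. $\hat{w}_t = \langle w_t, w_*\rangle$, $\tilde{w}_t = \langle w_t, v_*\rangle$. $\eta_0 = \max(n, \frac{32}{\gamma^2}\log\frac{256}{\gamma^2})$. $\lambda = \frac{1}{\gamma}\log\frac{1}{\exp(1/(8\eta))-1}$. An oscillation happens at iteration $t\ge 0$ if all of: (1) $\hat{w}_t \geq \lambda$; (2) $F(w_t) > 1/(8\eta)$ and $F(w_{t+1}) > 1/(8\eta)$; (3) $\tilde{w}_{t+1}\tilde{w}_t < 0$. *)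

From Stdlib Require Import Reals Lra.
Open Scope R_scope.

Definition vec2 := (R * R)%type.
Definition dot (u v : vec2) : R := fst u * fst v + snd u * snd v.
Definition norm2 (u : vec2) : R := sqrt (dot u u).
Definition vadd (u v : vec2) : vec2 := (fst u + fst v, snd u + snd v).
Definition vscale (a : R) (u : vec2) : vec2 := (a * fst u, a * snd u).

Fixpoint sumR (n : nat) (f : nat -> R) : R :=
  match n with O => 0 | S k => sumR k f + f k end.
Fixpoint vsum (n : nat) (f : nat -> vec2) : vec2 :=
  match n with O => (0, 0) | S k => vadd (vsum k f) (f k) end.

(* minimum over i < n of f i (n >= 1 in use) *)
Fixpoint minR (n : nat) (f : nat -> R) : R :=
  match n with
  | O => 0
  | S O => f O
  | S k => Rmin (minR k f) (f k)
  end.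

Definition F (n : nat) (x : nat -> vec2) (w : vec2) : R :=
  / INR n * sumR n (fun i => ln (1 + exp (- dot w (x i)))).

Definition gradF (n : nat) (x : nat -> vec2) (w : vec2) : vec2 :=
  vscale (- / INR n) (vsum n (fun i => vscale (/ (1 + exp (dot w (x i)))) (x i))).

Fixpoint gd (n : nat) (x : nat -> vec2) (eta : R) (t : nat) : vec2 :=
  match t with
  | O => (0, 0)
  | S k => let w := gd n x eta k in vadd w (vscale (- eta) (gradF n x w))
  end.

Definition margin (n : nat) (x : nat -> vec2) (w : vec2) : R :=
  minR n (fun i => dot w (x i)).

Definition is_max_margin (n : nat) (x : nat -> vec2) (gamma : R) (wstar : vec2) : Prop :=
  norm2 wstar = 1 /\ margin n x wstar = gamma /\
  (forall w, norm2 w = 1 -> margin n x w <= gamma).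

Definition lin_separable (n : nat) (x : nat -> vec2) : Prop :=
  exists w, forall i, (i < n)%nat -> dot w (x i) > 0.

Definition eta0 (n : nat) (gamma : R) : R :=
  Rmax (INR n) (32 / gamma ^ 2 * ln (256 / gamma ^ 2)).

Definition lambda (gamma eta : R) : R :=
  / gamma * ln (/ (exp (/ (8 * eta)) - 1)).

Definition oscillation (n : nat) (x : nat -> vec2) (eta gamma : R)
    (wstar vstar : vec2) (t : nat) : Prop :=
  let wt := gd n x eta t in
  let wt1 := gd n x eta (S t) in
  dot wt wstar >= lambda gamma eta /\
  F n x wt > / (8 * eta) /\ F n x wt1 > / (8 * eta) /\
  dot wt1 vstar * dot wt vstar < 0.

(* Write [a] and [b] for the coordinates along [wstar] and [vstar].  If
   [F w > 1/(8 eta)], some sample has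
   [<w, x_i> < L := ln (1 / (exp (1/(8 eta)) - 1)) < eta / 2], while
   [<w, x_i> = a(w) a(x_i) + b(w) b(x_i) >= gamma a(w) - |b(w)|].  So if
   [a(w_t) > eta / gamma], then [|b| > eta - L > eta / 2] at both [w_t] and
   [w_(t+1)] ([a] does not decrease along gradient descent since every
   [a(x_i) >= gamma > 0]).  A sign change of [b] between the two iterates thus
   needs a step longer than [eta], but every gradient step is shorter than
   [eta] because the logistic weights are below 1 and [|x_i| <= 1]. *)

From Stdlib Require Import Reals Lra Lia.
Open Scope R_scope.

Lemma dot_comm u v : dot u v = dot v u.
Proof. unfold dot; ring. Qed.

Lemma dot_vscale_l a u v : dot (vscale a u) v = a * dot u v.
Proof. unfold dot, vscale; simpl; ring. Qed.

Lemma dot_vadd_l u w v : dot (vadd u w) v = dot u v + dot w v.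
Proof. unfold dot, vadd; simpl; ring. Qed.

Lemma dot_self_ge0 u : 0 <= dot u u.
Proof. unfold dot; nra. Qed.

Lemma dot_self_norm2 u : dot u u = norm2 u * norm2 u.
Proof. unfold norm2; rewrite sqrt_sqrt; [reflexivity | apply dot_self_ge0]. Qed.

Lemma dot_sqr_le u v : dot u v * dot u v <= dot u u * dot v v.
Proof.
  destruct u as [u1 u2], v as [v1 v2]; unfold dot; simpl.
  assert (Lagrange : (u1 * u1 + u2 * u2) * (v1 * v1 + v2 * v2)
    - (u1 * v1 + u2 * v2) * (u1 * v1 + u2 * v2) = (u1 * v2 - u2 * v1) ^ 2) by ring.
  pose proof (pow2_ge_0 (u1 * v2 - u2 * v1)); lra.
Qed.

Lemma Rabs_dot_le1 u v : norm2 u <= 1 -> norm2 v <= 1 -> Rabs (dot u v) <= 1.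
Proof.
  intros Hu Hv.
  pose proof (dot_sqr_le u v) as Hcs; rewrite !dot_self_norm2 in Hcs.
  assert (0 <= norm2 u) by apply sqrt_pos; assert (0 <= norm2 v) by apply sqrt_pos.
  assert (Hsq : dot u v * dot u v <= 1).
  { apply Rle_trans with (1 := Hcs).
    replace 1 with ((1 * 1) * (1 * 1)) by ring.
    apply Rmult_le_compat; nra. }
  apply Rabs_le; split; nra.
Qed.

Lemma dot_orthonormal_decomp (ws vs : vec2) :
  dot ws ws = 1 -> dot vs vs = 1 -> dot vs ws = 0 ->
  forall u y, dot u y = dot u ws * dot y ws + dot u vs * dot y vs.
Proof.
  destruct ws as [p q], vs as [r s]; unfold dot; simpl; intros Hw Hv Hvw.
  (* [(r, s)] is [(p, q)] rotated by a right angle: [(r, s) = d (-q, p)]. *)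
  set (d := p * s - q * r).
  assert (Hd : d * d = 1).
  { replace (d * d) with ((p * p + q * q) * (r * r + s * s)
      - (r * p + s * q) * (r * p + s * q)) by (unfold d; ring).
    rewrite Hw, Hv, Hvw; ring. }
  assert (Hr : r = - q * d).
  { assert (E : r * (p * p + q * q) = p * (r * p + s * q) - q * d) by (unfold d; ring).
    rewrite Hw, Hvw in E; lra. }
  assert (Hs : s = p * d).
  { assert (E : s * (p * p + q * q) = q * (r * p + s * q) + p * d) by (unfold d; ring).
    rewrite Hw, Hvw in E; lra. }
  intros [u1 u2] [y1 y2]; simpl; rewrite Hr, Hs.
  transitivity (u1 * y1 * (p * p + q * q * (d * d)) + u2 * y2 * (q * q + p * p * (d * d))
    + (u1 * y2 + u2 * y1) * (p * q * (1 - d * d))).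
  - rewrite Hd, !Rmult_1_r, (Rplus_comm (q * q)), Hw; ring.
  - ring.
Qed.

Lemma sumR_ext n f g : (forall i, f i = g i) -> sumR n f = sumR n g.
Proof. intros H; induction n; simpl; [reflexivity | now rewrite IHn, H]. Qed.

Lemma sumR_ge0 n f : (forall i, (i < n)%nat -> 0 <= f i) -> 0 <= sumR n f.
Proof.
  induction n; intros H; simpl; [lra |].
  assert (0 <= sumR n f) by (apply IHn; intros; apply H; lia).
  assert (0 <= f n) by (apply H; lia).
  lra.
Qed.

Lemma Rabs_sumR_lt n f c : (0 < n)%nat -> (forall i, (i < n)%nat -> Rabs (f i) < c) ->
  Rabs (sumR n f) < INR n * c.
Proof.
  induction n as [| n IHn]; intros Hn H; [lia |].
  simpl sumR; rewrite S_INR.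
  assert (Hfn : Rabs (f n) < c) by (apply H; lia).
  pose proof (Rabs_triang (sumR n f) (f n)).
  destruct n as [| n].
  - simpl in *; rewrite Rplus_0_l; lra.
  - assert (Rabs (sumR (S n) f) < INR (S n) * c) by (apply IHn; [lia | intros; apply H; lia]).
    lra.
Qed.

Lemma sumR_gt_exists n f c : sumR n f > INR n * c -> exists i, (i < n)%nat /\ f i > c.
Proof.
  induction n as [| n IHn]; intros H; simpl sumR in H; [simpl in H; lra |].
  destruct (Rlt_le_dec c (f n)).
  - exists n; split; [lia | lra].
  - destruct IHn as [i [Hi Hfi]]; [rewrite S_INR in H; lra |].
    exists i; split; [lia | exact Hfi].
Qed.

Lemma dot_vsum_l n f v : dot (vsum n f) v = sumR n (fun i => dot (f i) v).
Proof.
  induction n; simpl.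
  - unfold dot; simpl; ring.
  - rewrite dot_vadd_l, IHn; reflexivity.
Qed.

Lemma minR_le n f i : (i < n)%nat -> minR n f <= f i.
Proof.
  revert i; induction n as [| n IHn]; intros i Hi; [lia |].
  destruct n as [| n].
  - replace i with 0%nat by lia; simpl; lra.
  - change (minR (S (S n)) f) with (Rmin (minR (S n) f) (f (S n))).
    destruct (Nat.eq_dec i (S n)) as [-> | Hne].
    + apply Rmin_r.
    + eapply Rle_trans; [apply Rmin_l | apply IHn; lia].
Qed.

Lemma minR_attained n f : (0 < n)%nat -> exists i, (i < n)%nat /\ minR n f = f i.
Proof.
  induction n as [| n IHn]; intros Hn; [lia |].
  destruct n as [| n].
  - exists 0%nat; split; [lia | reflexivity].
  - change (minR (S (S n)) f) with (Rmin (minR (S n) f) (f (S n))).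
    unfold Rmin; destruct (Rle_dec (minR (S n) f) (f (S n))).
    + destruct IHn as [i [Hi Hm]]; [lia |].
      exists i; split; [lia | exact Hm].
    + exists (S n); split; [lia | reflexivity].
Qed.

Lemma logistic_weight_bounds z : 0 < / (1 + exp z) < 1.
Proof.
  pose proof (exp_pos z).
  split; [apply Rinv_0_lt_compat; lra |].
  rewrite <- Rinv_1; apply Rinv_lt_contravar; lra.
Qed.

Lemma dot_gd_S n x eta t v :
  dot (gd n x eta (S t)) v = dot (gd n x eta t) v +
    eta * / INR n * sumR n (fun i => / (1 + exp (dot (gd n x eta t) (x i))) * dot (x i) v).
Proof.
  simpl gd; unfold gradF.
  rewrite dot_vadd_l, !dot_vscale_l, dot_vsum_l.
  rewrite (sumR_ext n _ (fun i => / (1 + exp (dot (gd n x eta t) (x i))) * dot (x i) v)).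
  - ring.
  - intros i; apply dot_vscale_l.
Qed.

Lemma gd_dot_le_S n x eta t v : 0 < eta -> (forall i, (i < n)%nat -> 0 <= dot (x i) v) ->
  dot (gd n x eta t) v <= dot (gd n x eta (S t)) v.
Proof.
  intros Heta Hv; rewrite dot_gd_S.
  assert (0 <= sumR n (fun i => / (1 + exp (dot (gd n x eta t) (x i))) * dot (x i) v)).
  { apply sumR_ge0; intros i Hi.
    pose proof (logistic_weight_bounds (dot (gd n x eta t) (x i))); pose proof (Hv i Hi); nra. }
  destruct (Nat.eq_dec n 0) as [-> | Hn].
  - simpl; lra.
  - assert (0 < / INR n) by (apply Rinv_0_lt_compat, lt_0_INR; lia).
    assert (0 < eta * / INR n) by (apply Rmult_lt_0_compat; assumption).
    nra.
Qed.

Lemma Rabs_gd_step_lt n x eta t v : (0 < n)%nat -> 0 < eta ->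
  (forall i, (i < n)%nat -> Rabs (dot (x i) v) <= 1) ->
  Rabs (dot (gd n x eta (S t)) v - dot (gd n x eta t) v) < eta.
Proof.
  intros Hn Heta Hv; rewrite dot_gd_S.
  set (S := sumR n _).
  assert (HS : Rabs S < INR n * 1).
  { apply Rabs_sumR_lt; [exact Hn |]; intros i Hi.
    pose proof (logistic_weight_bounds (dot (gd n x eta t) (x i))).
    rewrite Rabs_mult, Rabs_pos_eq by lra.
    pose proof (Hv i Hi); pose proof (Rabs_pos (dot (x i) v)); nra. }
  assert (HnR : 0 < INR n) by (apply lt_0_INR; exact Hn).
  replace (_ + _ - _) with (eta / INR n * S) by (unfold Rdiv; ring).
  rewrite Rabs_mult, Rabs_pos_eq by (apply Rlt_le, Rdiv_lt_0_compat; assumption).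
  apply Rmult_lt_reg_r with (INR n); [exact HnR |].
  replace (eta / INR n * Rabs S * INR n) with (eta * Rabs S) by (field; lra).
  nra.
Qed.

Lemma max_margin_le_dot n x gamma wstar i : is_max_margin n x gamma wstar ->
  (i < n)%nat -> gamma <= dot (x i) wstar.
Proof.
  intros [_ [Hm _]] Hi; rewrite <- Hm, dot_comm.
  exact (minR_le n (fun i => dot wstar (x i)) i Hi).
Qed.

Lemma max_margin_le1 n x gamma wstar : (0 < n)%nat ->
  (forall i, (i < n)%nat -> norm2 (x i) <= 1) -> is_max_margin n x gamma wstar ->
  gamma <= 1.
Proof.
  intros Hn Hx Hmax.
  pose proof (max_margin_le_dot n x gamma wstar 0 Hmax Hn).
  destruct Hmax as [Hw _].
  pose proof (Rabs_dot_le1 (x 0%nat) wstar (Hx 0%nat Hn) (Req_le _ _ Hw)) as Habs.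
  pose proof (RRle_abs (dot (x 0%nat) wstar)); lra.
Qed.

Lemma max_margin_pos n x gamma wstar : (0 < n)%nat -> lin_separable n x ->
  is_max_margin n x gamma wstar -> 0 < gamma.
Proof.
  intros Hn [w Hw] [_ [_ Hmax]].
  assert (Hww : 0 < dot w w).
  { destruct (Rle_lt_or_eq_dec _ _ (dot_self_ge0 w)) as [Hpos | Hzero]; [exact Hpos |].
    pose proof (dot_sqr_le w (x 0%nat)) as Hcs; rewrite <- Hzero, Rmult_0_l in Hcs.
    pose proof (Hw 0%nat Hn); nra. }
  set (u := vscale (/ norm2 w) w).
  assert (Hnw : 0 < norm2 w) by (apply sqrt_lt_R0; exact Hww).
  assert (Hu : norm2 u = 1).
  { unfold u, norm2 at 1; rewrite dot_vscale_l, dot_comm, dot_vscale_l, dot_self_norm2.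
    replace (/ norm2 w * (/ norm2 w * (norm2 w * norm2 w))) with 1 by (field; lra).
    apply sqrt_1. }
  destruct (minR_attained n (fun i => dot u (x i)) Hn) as [j [Hj Hmj]].
  pose proof (Hmax u Hu) as Hm; unfold margin in Hm; rewrite Hmj in Hm.
  unfold u in Hm; rewrite dot_vscale_l in Hm.
  pose proof (Rmult_lt_0_compat _ _ (Rinv_0_lt_compat _ Hnw) (Hw j Hj)).
  lra.
Qed.

Lemma F_gt_exists_dot_lt n x w c : 0 < c -> F n x w > c ->
  exists i, (i < n)%nat /\ dot w (x i) < ln (/ (exp c - 1)).
Proof.
  intros Hc HF; unfold F in HF.
  destruct (Nat.eq_dec n 0) as [-> | Hn]; [simpl in HF; lra |].
  assert (HnR : 0 < INR n) by (apply lt_0_INR; lia).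
  set (S := sumR n _) in HF.
  assert (HS : S > INR n * c).
  { replace S with (INR n * (/ INR n * S)) by (field; lra).
    apply Rmult_lt_compat_l; assumption. }
  destruct (sumR_gt_exists _ _ _ HS) as [i [Hi Hln]].
  exists i; split; [exact Hi |].
  pose proof (exp_pos (- dot w (x i))).
  assert (Hexp : exp c < 1 + exp (- dot w (x i))).
  { rewrite <- (exp_ln (1 + exp (- dot w (x i)))) by lra.
    apply exp_increasing; exact Hln. }
  pose proof (exp_ineq1_le c).
  rewrite ln_Rinv by lra.
  assert (ln (exp c - 1) < - dot w (x i)).
  { rewrite <- (ln_exp (- dot w (x i))); apply ln_increasing; lra. }
  lra.
Qed.

Lemma ln_inv_expm1_lt c : 0 < c -> ln (/ (exp c - 1)) < ln (/ c).
Proof.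
  intros Hc.
  assert (c < exp c - 1) by (pose proof (exp_ineq1 c (Rgt_not_eq c 0 Hc)); lra).
  apply ln_increasing; [apply Rinv_0_lt_compat; lra |].
  apply Rinv_lt_contravar; nra.
Qed.

Lemma ln_mul8_lt_half y : 32 <= y -> ln (8 * y) < y / 2.
Proof.
  intros Hy.
  rewrite <- (ln_exp (y / 2)); apply ln_increasing; [lra |].
  replace (y / 2) with (y / 8 + y / 8 + y / 8 + y / 8) by field.
  rewrite !exp_plus.
  pose proof (exp_ineq1_le (y / 8)) as He.
  assert (H4 : 5 <= 1 + y / 8) by lra.
  apply Rlt_le_trans with ((1 + y / 8) * (1 + y / 8) * (1 + y / 8) * (1 + y / 8)).
  - nra.
  - assert (0 <= (1 + y / 8) * (1 + y / 8)) by nra.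
    assert ((1 + y / 8) * (1 + y / 8) <= exp (y / 8) * exp (y / 8)) by nra.
    nra.
Qed.

Lemma ln_inv_expm1_inv8_lt_half eta : 32 <= eta ->
  ln (/ (exp (/ (8 * eta)) - 1)) < eta / 2.
Proof.
  intros Heta.
  apply Rlt_trans with (ln (/ / (8 * eta))).
  - apply ln_inv_expm1_lt, Rinv_0_lt_compat; lra.
  - rewrite Rinv_inv; apply ln_mul8_lt_half; exact Heta.
Qed.

Lemma eta0_ge_32 n gamma : 0 < gamma <= 1 -> 32 <= eta0 n gamma.
Proof.
  intros Hg; unfold eta0.
  eapply Rle_trans; [| apply Rmax_r].
  assert (Hg2 : 0 < gamma ^ 2 <= 1) by (split; nra).
  assert (Hinv : 1 <= / gamma ^ 2).
  { rewrite <- Rinv_1; apply Rinv_le_contravar; lra. }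
  assert (Hln : 1 <= ln (256 / gamma ^ 2)).
  { rewrite <- (ln_exp 1); apply Rlt_le, ln_increasing; [apply exp_pos |].
    pose proof exp_le_3; unfold Rdiv; nra. }
  unfold Rdiv in *; nra.
Qed.

Lemma Rabs_sub_opp_sign a b : a * b < 0 -> Rabs (a - b) = Rabs a + Rabs b.
Proof.
  intros Hab; unfold Rabs.
  repeat destruct Rcase_abs; nra.
Qed.

Lemma dot_ge_margin_sub_abs (wstar vstar y w : vec2) (gamma : R) :
  norm2 wstar = 1 -> norm2 vstar = 1 -> dot vstar wstar = 0 ->
  norm2 y <= 1 -> gamma <= dot y wstar -> 0 <= dot w wstar ->
  gamma * dot w wstar - Rabs (dot w vstar) <= dot w y.
Proof.
  intros Hw Hv Hvw Hy Hgy Hpos.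
  assert (Hdw : dot wstar wstar = 1) by (rewrite dot_self_norm2, Hw; ring).
  assert (Hdv : dot vstar vstar = 1) by (rewrite dot_self_norm2, Hv; ring).
  rewrite (dot_orthonormal_decomp wstar vstar Hdw Hdv Hvw w y).
  pose proof (Rabs_dot_le1 y vstar Hy (Req_le _ _ Hv)) as Hb.
  assert (Habs : Rabs (dot w vstar * dot y vstar) <= Rabs (dot w vstar)).
  { rewrite Rabs_mult; pose proof (Rabs_pos (dot w vstar)); nra. }
  assert (- (dot w vstar * dot y vstar) <= Rabs (dot w vstar * dot y vstar))
    by (rewrite <- Rabs_Ropp; apply RRle_abs).
  nra.
Qed.

Lemma max_margin_gd_dot_le_S n x gamma wstar eta t :
  is_max_margin n x gamma wstar -> 0 < gamma -> 0 < eta ->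
  dot (gd n x eta t) wstar <= dot (gd n x eta (S t)) wstar.
Proof.
  intros Hmax Hg Heta; apply gd_dot_le_S; [exact Heta |]; intros i Hi.
  pose proof (max_margin_le_dot n x gamma wstar i Hmax Hi); lra.
Qed.

Lemma F_gt_Rabs_dot_gt n x gamma wstar vstar w c :
  (forall i, (i < n)%nat -> norm2 (x i) <= 1) ->
  is_max_margin n x gamma wstar -> norm2 vstar = 1 -> dot vstar wstar = 0 ->
  0 <= dot w wstar -> 0 < c -> F n x w > c ->
  gamma * dot w wstar - ln (/ (exp c - 1)) < Rabs (dot w vstar).
Proof.
  intros Hx Hmax Hv Hvw Hpos Hc HF.
  destruct (F_gt_exists_dot_lt n x w c Hc HF) as [i [Hi Hdot]].
  pose proof (dot_ge_margin_sub_abs wstar vstar (x i) w gamma (proj1 Hmax) Hv Hvw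
                (Hx i Hi) (max_margin_le_dot n x gamma wstar i Hmax Hi) Hpos).
  lra.
Qed.

Theorem lemma4 (n : nat) (x : nat -> vec2) (gamma : R) (wstar vstar : vec2)
    (eta : R) (t : nat) :
  (0 < n)%nat ->
  (forall i, (i < n)%nat -> norm2 (x i) <= 1) ->
  lin_separable n x ->
  is_max_margin n x gamma wstar ->
  norm2 vstar = 1 -> dot vstar wstar = 0 ->
  0 < eta -> eta >= eta0 n gamma ->
  oscillation n x eta gamma wstar vstar t ->
  dot (gd n x eta t) wstar <= eta / gamma.
Proof.
  intros Hn Hx Hsep Hmax Hv Hvw Heta Heta0 [_ [HF0 [HF1 Hsign]]].
  pose proof (max_margin_pos n x gamma wstar Hn Hsep Hmax) as Hg0.
  pose proof (max_margin_le1 n x gamma wstar Hn Hx Hmax) as Hg1.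
  pose proof (eta0_ge_32 n gamma (conj Hg0 Hg1)) as Heta32.
  pose proof (ln_inv_expm1_inv8_lt_half eta ltac:(lra)) as HL.
  assert (Hc : 0 < / (8 * eta)) by (apply Rinv_0_lt_compat; lra).
  pose proof (Rabs_gd_step_lt n x eta t vstar Hn Heta
                (fun i Hi => Rabs_dot_le1 _ _ (Hx i Hi) (Req_le _ _ Hv))) as Hstep.
  rewrite (Rabs_sub_opp_sign _ _ Hsign) in Hstep.
  pose proof (max_margin_gd_dot_le_S n x gamma wstar eta t Hmax Hg0 Heta) as Hmono.
  apply Rnot_lt_le; intros Hlarge.
  assert (Hfar0 : eta < gamma * dot (gd n x eta t) wstar).
  { replace eta with (gamma * (eta / gamma)) at 1 by (field; lra).
    apply Rmult_lt_compat_l; assumption. }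
  assert (Hfar1 : eta < gamma * dot (gd n x eta (S t)) wstar).
  { apply Rlt_le_trans with (1 := Hfar0); apply Rmult_le_compat_l; lra. }
  assert (Hpos0 : 0 <= dot (gd n x eta t) wstar) by nra.
  assert (Hpos1 : 0 <= dot (gd n x eta (S t)) wstar) by nra.
  pose proof (F_gt_Rabs_dot_gt n x gamma wstar vstar _ _ Hx Hmax Hv Hvw Hpos0 Hc HF0).
  pose proof (F_gt_Rabs_dot_gt n x gamma wstar vstar _ _ Hx Hmax Hv Hvw Hpos1 Hc HF1).
  lra.
Qed.
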